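(* (1) For every fixed integer $d\ge 3$ there is a constant $C_d$ such that $m^*(n,d)\le C_d(\log_2 n)^{\lfloor\log_2 d\rfloor}$ for all integers $n\ge 2$; that is, $m^*(n,d)=O\big(\log_2^{\lfloor \log_2 d\rfloor} n\big)$. (2) For every integer $n\ge 3$, $m^*(n,3)\le 2\lceil\log_2 n\rceil-1$.
   Context: For a binary matrix $M$ and a nonempty set $S$ of its columns, $S$ is a stopping set if the submatrix formed by $S$ has no row with exactly one $1$; $s(M)$ is the minimum size of a stopping set ($+\infty$ if none). $M$ is $d$-decodable if $s(M)\ge d+1$. $m^*(n,d)$ is the minimum $m$ such that an $m\times n$ $d$-decodable binary matrix exists. *)

From Stdlib Require Import Reals.
From mathcomp Require Import all_boot all_algebra.

Set Implicit Arguments.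
Unset Strict Implicit.
Unset Printing Implicit Defensive.

Definition stopping_set (m n : nat) (M : 'M[bool]_(m, n)) (S : {set 'I_n}) : bool :=
  (S != set0) && [forall i : 'I_m, #|[set j in S | M i j]| != 1%N].

(* M is d-decodable: s(M) >= d+1, i.e. every stopping set has size >= d+1
   (vacuous when there is no stopping set, s(M) = +oo). *)
Definition decodable (d m n : nat) (M : 'M[bool]_(m, n)) : bool :=
  [forall S : {set 'I_n}, stopping_set M S ==> (d < #|S|)%N].

Definition has_decodable (n d : nat) : pred nat :=
  fun m => [exists M : 'M[bool]_(m, n), decodable d M].

Lemma has_decodable_ex (n d : nat) : exists m, has_decodable n d m.
Proof.
exists n; apply/existsP; exists (\matrix_(i < n, j < n) (i == j))%R.
apply/forallP => S; apply/implyP => /andP [/set0Pn [j jS] /forallP /(_ j)].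
suff -> : [set j0 in S | (\matrix_(i < n, j1 < n) (i == j1))%R j j0] = [set j].
  by rewrite cards1.
apply/setP => k; rewrite !inE mxE eq_sym.
by case: eqP => [->|]; rewrite ?jS ?andbF.
Qed.

Definition mstar (n d : nat) : nat := ex_minn (has_decodable_ex n d).

Definition log2R (x : R) : R := Rdiv (ln x) (ln (INR 2)).

(* Part (1): give the columns distinct binary words of length L and take as
   rows all conjunctions of at most k bit constraints, (2L+1)^k of them.  A
   stopping set S is never cut down to a single element by such a conjunction;
   splitting S along a bit on which two of its elements differ and recursing
   on both halves gives |S| >= 2^(k+1).  With k = floor(log2 d) this beats d,
   and L = floor(log2 n) + 1 yields the (log2 n)^k bound.
   Part (2): for words of length L+2 take every bit row and the complement of
   every bit row but the last.  On a stopping set of size at most 3 a bit whose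
   row and complemented row are both present must be constant, so the last bit
   alone separates the elements; then its row forces all of them to be 0 there,
   so the set is a single column, which a bit row or its complement isolates. *)

From Stdlib Require Import Reals Lra.
From mathcomp Require Import all_boot all_algebra zify.

Set Implicit Arguments.
Unset Strict Implicit.
Unset Printing Implicit Defensive.

Lemma cardsIDp (T : finType) (P : pred T) (S : {set T}) :
  #|[set x in S | P x]| + #|[set x in S | ~~ P x]| = #|S|.
Proof.
rewrite -(cardsID [set x | P x] S); congr (_ + _); apply: eq_card => x.
  by rewrite !inE.
by rewrite !inE andbC.
Qed.

Lemma cards_fiber2 (T : finType) (f : T -> bool) (S : {set T}) x y :
  f x != f y ->
  #|[set z in S | f z == f x]| + #|[set z in S | f z == f y]| = #|S|.
Proof.
rewrite -(cardsIDp (fun z => f z == f x) S) => fxy; congr (_ + _).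
apply: eq_card => z; rewrite !inE.
by move: fxy; case: (f x); case: (f y); case: (f z).
Qed.

Lemma card_le_inj (T U : finType) :
  #|T| <= #|U| -> exists f : T -> U, injective f.
Proof.
move=> leTU; exists (fun x => enum_val (widen_ord leTU (enum_rank x))).
by move=> x y /enum_val_inj /(congr1 val) /= /ord_inj; apply: enum_rank_inj.
Qed.

Section PredMatrix.
Variables (R : finType) (n : nat) (P : R -> 'I_n -> bool).

Definition pred_mx : 'M[bool]_(#|R|, n) := \matrix_(i, j) P (enum_val i) j.

Lemma stopping_set_pred_mx S :
  stopping_set pred_mx S = (S != set0) && [forall r, #|[set j in S | P r j]| != 1].
Proof.
have rowE r : [set j in S | pred_mx (enum_rank r) j] = [set j in S | P r j].
  by apply/setP => j; rewrite !inE mxE enum_rankK.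
congr (_ && _); apply/forallP/forallP => [H r | H i].
  by rewrite -rowE.
by rewrite -[i]enum_valK rowE.
Qed.

Lemma mstar_le_pred_mx d :
  (forall S : {set 'I_n}, S != set0 ->
     (forall r, #|[set j in S | P r j]| != 1) -> d < #|S|) ->
  mstar n d <= #|R|.
Proof.
move=> H; rewrite /mstar; case: ex_minnP => m _; apply.
apply/existsP; exists pred_mx; apply/forallP => S.
by apply/implyP; rewrite stopping_set_pred_mx => /andP [S0 /forallP /H]; apply.
Qed.

End PredMatrix.

Section BitConstraints.
Variables (T I : finType) (enc : T -> {ffun I -> bool}).
Hypothesis enc_inj : injective enc.

Definition satisfies (cs : seq (I * bool)) (x : T) : bool :=
  all (fun c => enc x c.1 == c.2) cs.

Definition no_isolation (j : nat) (S : {set T}) : Prop :=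
  forall cs, size cs <= j -> #|[set x in S | satisfies cs x]| != 1.

Lemma no_isolation_fiber j S b beta :
  no_isolation j.+1 S -> no_isolation j [set x in S | enc x b == beta].
Proof.
move=> noS cs size_cs; have := noS ((b, beta) :: cs) size_cs.
suff -> : [set x in [set x in S | enc x b == beta] | satisfies cs x] =
          [set x in S | satisfies ((b, beta) :: cs) x] by [].
by apply/setP => x; rewrite !inE andbA.
Qed.

Lemma exists_bit_neq x y : x != y -> exists b, enc x b != enc y b.
Proof.
move=> xy; apply/existsP; apply: contraR xy => /existsPn enc_eq.
by apply/eqP/enc_inj/ffunP => b; apply/eqP/negbNE.
Qed.

Lemma no_isolation_card_gt1 j S : S != set0 -> no_isolation j S -> 1 < #|S|.
Proof.
move=> S0 /(_ [::] (leq0n _)); rewrite -card_gt0 in S0.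
suff -> : [set x in S | satisfies [::] x] = S by lia.
by apply/setP => x; rewrite !inE andbT.
Qed.

Lemma card_no_isolation j S : S != set0 -> no_isolation j S -> 2 ^ j.+1 <= #|S|.
Proof.
elim: j S => [|j IHj] S S0 noS; first exact: no_isolation_card_gt1 noS.
case/card_gt1P: (no_isolation_card_gt1 S0 noS) => x [y [xS yS]].
case/exists_bit_neq => b neq_b.
have fiber_big z : z \in S -> 2 ^ j.+1 <= #|[set x in S | enc x b == enc z b]|.
  move=> zS; apply: IHj; last exact: no_isolation_fiber.
  by apply/set0Pn; exists z; rewrite !inE zS eqxx.
rewrite -(@cards_fiber2 _ (fun z => enc z b) S x y neq_b) expnS mul2n -addnn.
by apply: leq_add; apply: fiber_big.
Qed.

Variable k : nat.

Definition row_satisfies (r : {ffun 'I_k -> option (I * bool)}) (x : T) : bool :=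
  [forall i, if r i is Some c then enc x c.1 == c.2 else true].

Definition row_of (cs : seq (I * bool)) : {ffun 'I_k -> option (I * bool)} :=
  [ffun i : 'I_k => nth None (map Some cs) i].

Lemma row_satisfies_row_of cs x :
  size cs <= k -> row_satisfies (row_of cs) x = satisfies cs x.
Proof.
move=> size_cs; apply/forallP/allP => [H c c_cs | H i].
  have c_k : index c cs < k by apply: leq_trans size_cs; rewrite index_mem.
  by have := H (Ordinal c_k); rewrite ffunE /= (nth_map c) ?index_mem ?nth_index.
rewrite ffunE; case: (ltnP i (size cs)) => i_cs; last by rewrite nth_default ?size_map.
case E : (nth None _ i) => [c|] //; apply: H.
by rewrite -(mem_map (@Some_inj _)) -E mem_nth // size_map.
Qed.

Lemma card_gt_of_row_satisfies d S :
  d < 2 ^ k.+1 -> S != set0 ->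
  (forall r, #|[set x in S | row_satisfies r x]| != 1) -> d < #|S|.
Proof.
move=> d_lt S0 rowsS; apply: leq_trans d_lt (card_no_isolation S0 _).
move=> cs size_cs; have := rowsS (row_of cs).
by under eq_finset => x do rewrite row_satisfies_row_of //.
Qed.

End BitConstraints.

Lemma mstar_le_constraint_rows d n k L :
  d < 2 ^ k.+1 -> n <= 2 ^ L -> mstar n d <= (2 * L).+1 ^ k.
Proof.
move=> d_lt n_le.
have [enc enc_inj] : exists enc : 'I_n -> {ffun 'I_L -> bool}, injective enc.
  by apply: card_le_inj; rewrite card_ffun card_bool !card_ord.
have -> : (2 * L).+1 ^ k = #|{ffun 'I_k -> option ('I_L * bool)}|.
  by rewrite card_ffun card_option card_prod card_bool !card_ord mulnC.
apply: (mstar_le_pred_mx (P := @row_satisfies _ _ enc k)).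
by move=> S; exact: (card_gt_of_row_satisfies enc_inj d_lt).
Qed.

Lemma constant_on_small (T : finType) (P : pred T) (S : {set T}) :
  #|S| <= 3 -> #|[set x in S | P x]| != 1 -> #|[set x in S | ~~ P x]| != 1 ->
  {in S &, forall x y, P x = P y}.
Proof.
move=> S3 P_ne1 nP_ne1 x y xS yS; apply/eqP; apply: contraT => Pxy.
have gt1 (A : {set T}) z : z \in A -> #|A| != 1 -> 1 < #|A|.
  move=> zA; have : 0 < #|A| by apply/card_gt0P; exists z.
  lia.
wlog Px : x y xS yS Pxy / P x => [hyp|].
  case Px: (P x); first exact: (hyp x y).
  apply: (hyp y x) => //; first by rewrite eq_sym.
  by move: Pxy; rewrite Px; case: (P y).
have nPy : ~~ P y by rewrite Px in Pxy.
have := gt1 _ x _ P_ne1; have := gt1 _ y _ nP_ne1; rewrite !inE xS yS Px nPy.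
by have := cardsIDp P S; lia.
Qed.

Section ComplementedBits.
Variables (T I : finType) (enc : T -> {ffun option I -> bool}).
Hypothesis enc_inj : injective enc.

Definition complemented_row (r : option I + I) (x : T) : bool :=
  match r with inl b => enc x b | inr i => ~~ enc x (Some i) end.

Lemma card_gt3_of_complemented_row (i0 : I) S :
  S != set0 -> (forall r, #|[set x in S | complemented_row r x]| != 1) -> 3 < #|S|.
Proof.
move=> S0 rowsS; rewrite ltnNge; apply/negP => S3.
have const i : {in S &, forall x y, enc x (Some i) = enc y (Some i)}.
  exact: constant_on_small S3 (rowsS (inl (Some i))) (rowsS (inr i)).
have last_inj : {in S &, forall x y, enc x None = enc y None -> x = y}.
  move=> x y xS yS eq_None; apply/enc_inj/ffunP => -[i|] //.
  exact: const.
have None_false : {in S, forall x, enc x None = false}.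
  move=> x xS; apply/negbTE/negP => x_None.
  have : #|[set y in S | enc y None]| <= 1.
    apply/card_le1_eqP => y z; rewrite !inE => /andP [yS y_None] /andP [zS z_None].
    by apply: last_inj; rewrite ?y_None ?z_None.
  have : 0 < #|[set y in S | enc y None]| by apply/card_gt0P; exists x; rewrite !inE xS.
  by have := rowsS (inl None); simpl; lia.
have S1 : #|S| <= 1.
  by apply/card_le1_eqP => x y xS yS; apply: last_inj; rewrite ?None_false.
have := cardsIDp (fun x => enc x (Some i0)) S; rewrite -card_gt0 in S0.
by have := rowsS (inl (Some i0)); have := rowsS (inr i0); simpl; lia.
Qed.

End ComplementedBits.

Lemma mstar3_le n L : n <= 2 ^ L.+2 -> mstar n 3 <= (2 * L).+3.
Proof.
move=> n_le.
have [enc enc_inj] : exists enc : 'I_n -> {ffun option 'I_L.+1 -> bool}, injective enc.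
  by apply: card_le_inj; rewrite card_ffun card_bool card_option !card_ord.
apply: leq_trans (mstar_le_pred_mx (P := complemented_row enc) _) _.
  exact: card_gt3_of_complemented_row enc_inj ord0.
by rewrite card_sum card_option !card_ord; lia.
Qed.

Lemma mstar_le_trunc_log d n :
  1 < d -> 1 < n -> mstar n d <= (5 * trunc_log 2 n) ^ trunc_log 2 d.
Proof.
move=> d_gt1 n_gt1; have t_gt0 : 0 < trunc_log 2 n by rewrite trunc_log_gt0.
apply: leq_trans (mstar_le_constraint_rows (L := (trunc_log 2 n).+1) _ _) _.
- exact: trunc_log_ltn.
- exact/ltnW/trunc_log_ltn.
- by rewrite leq_exp2r ?trunc_log_gt0 //; lia.
Qed.

Lemma mstar3_le_up_log n : 2 < n -> mstar n 3 <= 2 * up_log 2 n - 1.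
Proof.
move=> n_gt2; have [l up_log_eq] : exists l, up_log 2 n = l.+2.
  have : 1 < up_log 2 n.
    rewrite ltnNge; apply/negP => up_le1.
    have : n <= 2 ^ 1 by apply: leq_trans (@up_logP 2 n isT) _; rewrite leq_exp2l.
    lia.
  by case: (up_log 2 n) => [|[|l]] //; exists l.
rewrite up_log_eq (_ : 2 * l.+2 - 1 = (2 * l).+3); last by lia.
by apply: mstar3_le; rewrite -up_log_eq; apply: up_logP.
Qed.

Section Log2.
Local Open Scope R_scope.

Lemma INR_expn (m k : nat) : INR (m ^ k) = INR m ^ k.
Proof. by elim: k => // k IHk; rewrite expnS mult_INR IHk. Qed.

Lemma log2R_ge (t n : nat) : (2 ^ t <= n)%N -> INR t <= log2R (INR n).
Proof.
move=> le_2t_n.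
have two_gt1 : 1 < INR 2 by rewrite /=; lra.
have pow_pos : 0 < INR (2 ^ t) by apply/lt_0_INR/ltP; rewrite expn_gt0.
have pow_le : INR (2 ^ t) <= INR n by apply/le_INR/leP.
have -> : INR t = log2R (INR (2 ^ t)) by rewrite INR_expn; symmetry; apply: Rlog_pow; lra.
apply: Rmult_le_compat_r.
  by apply/Rlt_le/Rinv_0_lt_compat; rewrite -ln_1; apply: ln_increasing; lra.
case: (Rle_lt_or_eq_dec _ _ pow_le) => [lt | ->]; last exact: Rle_refl.
exact/Rlt_le/ln_increasing.
Qed.

End Log2.

Theorem theorem5p2 :
  (forall d : nat, (3 <= d)%N ->
     exists C : R, forall n : nat, (2 <= n)%N ->
       Rle (INR (mstar n d)) (Rmult C (pow (log2R (INR n)) (trunc_log 2 d))))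
  /\
  (forall n : nat, (3 <= n)%N -> (mstar n 3 <= 2 * up_log 2 n - 1)%N).
Proof.
split=> [d d_ge3 | n]; last exact: mstar3_le_up_log.
exists (pow (INR 5) (trunc_log 2 d)) => n n_ge2.
have /leP/le_INR mstar_le := mstar_le_trunc_log (ltnW d_ge3) n_ge2.
apply: Rle_trans mstar_le _.
rewrite INR_expn mult_INR Rpow_mult_distr; apply: Rmult_le_compat_l.
  exact/pow_le/pos_INR.
apply: pow_incr; split; first exact: pos_INR.
by apply/log2R_ge/trunc_logP => //; apply: ltnW.
Qed.
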